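(* Let $M$ be a monoid (associative binary operation $\mu:M\times M\to M$, $\mu(a,b)=a\ast b$, with identity $e$) equipped with a topology. The following are equivalent: (1) $M$ is a pre-$\Delta$-monoid; (2) $\Delta(M)$, with the same operation, is a $\Delta$-monoid; (3) for every $k\geq 2$ the $k$-ary operation $\mu_k:\Delta(M^k)\to M$, $\mu_k(a_1,\dots,a_k)=a_1\ast a_2\ast\cdots\ast a_k$, is continuous; (4) for every $\Delta$-generated space $D$ and all continuous maps $f,g:D\to M$, the pointwise product $f\ast g:D\to M$, $x\mapsto f(x)\ast g(x)$, is continuous.
   Context: $I=[0,1]$. A space $X$ is $\Delta$-generated if $U\subseteq X$ is open iff $\alpha^{-1}(U)$ is open in $I$ for every continuous path $\alpha:I\to X$. For a space $X$, $\Delta(X)$ denotes the same underlying set with the topology consisting of all sets $U$ such that $\alpha^{-1}(U)$ is open in $I$ for every continuous path $\alpha:I\to X$ (this is finer than the original topology and is $\Delta$-generated). A pre-$\Delta$-monoid is a space $M$ with a monoid operation $\ast$ such that for any continuous paths $\alpha,\beta:I\to M$, the pointwise product path $\alpha\ast\beta$, $t\mapsto\alpha(t)\ast\beta(t)$, is continuous. A pre-$\Delta$-monoid whose underlying space is $\Delta$-generated is called a $\Delta$-monoid. $M^k$ carries the product topology. *)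

From Stdlib Require Import Reals Lra Lia Arith List.
Open Scope R_scope.

Definition is_topology {X : Type} (O : (X -> Prop) -> Prop) : Prop :=
  O (fun _ => True) /\
  (forall U V, O U -> O V -> O (fun x => U x /\ V x)) /\
  (forall F : (X -> Prop) -> Prop,
      (forall U, F U -> O U) -> O (fun x => exists U, F U /\ U x)).

Definition continuous {X Y : Type} (OX : (X -> Prop) -> Prop)
  (OY : (Y -> Prop) -> Prop) (f : X -> Y) : Prop :=
  forall V, OY V -> OX (fun x => V (f x)).

Definition I : Type := { t : R | 0 <= t <= 1 }.

Definition I_open (U : I -> Prop) : Prop :=
  forall t : I, U t -> exists eps, eps > 0 /\
    forall s : I, Rabs (proj1_sig s - proj1_sig t) < eps -> U s.

Definition DeltaT {X : Type} (O : (X -> Prop) -> Prop) (U : X -> Prop) : Prop :=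
  forall alpha : I -> X, continuous I_open O alpha -> I_open (fun t => U (alpha t)).

Definition Delta_generated {X : Type} (O : (X -> Prop) -> Prop) : Prop :=
  forall U, O U <-> DeltaT O U.

Definition is_monoid {M : Type} (op : M -> M -> M) (e : M) : Prop :=
  (forall a b c, op a (op b c) = op (op a b) c) /\
  (forall a, op e a = a) /\ (forall a, op a e = a).

Definition pre_Delta_monoid {M : Type} (O : (M -> Prop) -> Prop) (op : M -> M -> M) : Prop :=
  forall alpha beta : I -> M,
    continuous I_open O alpha -> continuous I_open O beta ->
    continuous I_open O (fun t => op (alpha t) (beta t)).

Definition Delta_monoid {M : Type} (O : (M -> Prop) -> Prop) (op : M -> M -> M) : Prop :=
  Delta_generated O /\ pre_Delta_monoid O op.

Definition fin (k : nat) : Type := { i : nat | (i < k)%nat }.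

Definition prod_open {M : Type} (O : (M -> Prop) -> Prop) (k : nat)
  (U : (fin k -> M) -> Prop) : Prop :=
  forall a, U a -> exists V : fin k -> (M -> Prop),
    (forall i, O (V i)) /\ (forall i, V i (a i)) /\
    (forall b, (forall i, V i (b i)) -> U b).

(* mu_k (a_1,...,a_k) = a_1 * a_2 * ... * a_k  (coordinates indexed 0..k-1). *)
Definition coord {M : Type} (e : M) (k : nat) (a : fin k -> M) (i : nat) : M :=
  match lt_dec i k with
  | left h => a (exist _ i h)
  | right _ => e
  end.

Definition mu_k {M : Type} (op : M -> M -> M) (e : M) (k : nat) (a : fin k -> M) : M :=
  fold_right (fun i acc => op (coord e k a i) acc) e (seq 0 k).

(* All four conditions are statements about paths.  A map out of a
   Delta-generated space, and in particular out of Delta(X), is continuous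
   exactly when its composites with paths are, and M and Delta(M) have the
   same paths.  A path in M^k is a k-tuple of paths in M, so the k-ary
   product of paths is continuous by iterating the binary one; conversely
   mu_2 (a, b) = a * b thanks to the right unit. *)
From Stdlib Require Import Reals Lra Lia Arith List.
Open Scope R_scope.

Lemma continuous_comp {X Y Z : Type} (OX : (X -> Prop) -> Prop)
  (OY : (Y -> Prop) -> Prop) (OZ : (Z -> Prop) -> Prop) (f : X -> Y) (g : Y -> Z) :
  continuous OX OY f -> continuous OY OZ g -> continuous OX OZ (fun x => g (f x)).
Proof. intros Hf Hg W HW. exact (Hf _ (Hg W HW)). Qed.

Lemma fin_eq (k i : nat) (h : (i < k)%nat) (j : fin k) :
  proj1_sig j = i -> j = exist _ i h.
Proof. destruct j as [j hj]; simpl; intros ->; f_equal; apply le_unique. Qed.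

Lemma I_open_ext (U U' : I -> Prop) :
  I_open U -> (forall t, U t <-> U' t) -> I_open U'.
Proof.
  intros HU Heq t Ht. apply Heq in Ht. destruct (HU t Ht) as [eps [He Hs]].
  exists eps; split; [exact He|]. intros s Hs'. apply Heq. now apply Hs.
Qed.

Lemma I_topology : is_topology I_open.
Proof.
  split; [|split].
  - intros t _. exists 1; split; [lra|]; auto.
  - intros U V HU HV t [Ut Vt].
    destruct (HU t Ut) as [e1 [He1 H1]]. destruct (HV t Vt) as [e2 [He2 H2]].
    exists (Rmin e1 e2); split; [now apply Rmin_pos|].
    intros s Hs. split; [apply H1 | apply H2];
      eapply Rlt_le_trans; eauto; [apply Rmin_l | apply Rmin_r].
  - intros F HF t [U [FU Ut]].
    destruct (HF U FU t Ut) as [eps [He H]].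
    exists eps; split; [exact He|]. intros s Hs. exists U; split; auto.
Qed.

Lemma I_Delta_generated : Delta_generated I_open.
Proof.
  intros U; split.
  - intros HU alpha Ha. exact (Ha U HU).
  - intros H. apply (H (fun t => t)). intros V HV. exact HV.
Qed.

Lemma I_open_fin_Inter (k : nat) (U : fin k -> I -> Prop) :
  (forall i, I_open (U i)) -> I_open (fun t => forall i, U i t).
Proof.
  intros HU.
  destruct I_topology as [Hfull [Hcap _]].
  assert (Hrow : forall n, I_open (fun t => forall i, proj1_sig i = n -> U i t)).
  { intros n. destruct (lt_dec n k) as [h|h].
    - apply (I_open_ext _ _ (HU (exist _ n h))). intros t; split.
      + intros Ht i Hi. now rewrite (fin_eq k n h i Hi).
      + intros Ht. now apply Ht.
    - apply (I_open_ext _ _ Hfull). intros t; split; [|auto].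
      intros _ [i hi] Hi. simpl in Hi. lia. }
  assert (Hbelow : forall n, I_open (fun t => forall i, (proj1_sig i < n)%nat -> U i t)).
  { induction n as [|n IH].
    - apply (I_open_ext _ _ Hfull). intros t; split; [|auto]. intros _ i Hi. lia.
    - apply (I_open_ext _ _ (Hcap _ _ IH (Hrow n))). intros t; split.
      + intros [Hlt Heq] i Hi.
        destruct (Nat.eq_dec (proj1_sig i) n); [now apply Heq | apply Hlt; lia].
      + intros Ht; split; intros i Hi; apply Ht; lia. }
  apply (I_open_ext _ _ (Hbelow k)). intros t; split.
  - intros Ht i. apply Ht, proj2_sig.
  - auto.
Qed.

Lemma const_path_continuous {M : Type} (O : (M -> Prop) -> Prop) (c : M) :
  continuous I_open O (fun _ => c).
Proof. intros V _ t Ht. exists 1; split; [lra|]. intros; exact Ht. Qed.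

Lemma path_continuous_ext {M : Type} (O : (M -> Prop) -> Prop) (alpha beta : I -> M) :
  (forall t, alpha t = beta t) ->
  continuous I_open O alpha -> continuous I_open O beta.
Proof.
  intros Heq Ha V HV. apply (I_open_ext _ _ (Ha V HV)). intros t. now rewrite Heq.
Qed.

Lemma continuous_DeltaT_iff {X Y : Type} (OX : (X -> Prop) -> Prop)
  (OY : (Y -> Prop) -> Prop) (f : X -> Y) :
  continuous (DeltaT OX) OY f <->
  forall alpha, continuous I_open OX alpha -> continuous I_open OY (fun t => f (alpha t)).
Proof.
  split.
  - intros Hf alpha Ha V HV. exact (Hf V HV alpha Ha).
  - intros Hf V HV alpha Ha. exact (Hf alpha Ha V HV).
Qed.

Lemma Delta_generated_continuous {X Y : Type} (OX : (X -> Prop) -> Prop)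
  (OY : (Y -> Prop) -> Prop) (f : X -> Y) :
  Delta_generated OX ->
  (forall alpha, continuous I_open OX alpha -> continuous I_open OY (fun t => f (alpha t))) ->
  continuous OX OY f.
Proof.
  intros HX Hf V HV. apply (proj2 (HX _)). exact (proj2 (continuous_DeltaT_iff _ _ f) Hf V HV).
Qed.

Lemma path_continuous_DeltaT {M : Type} (O : (M -> Prop) -> Prop) (alpha : I -> M) :
  continuous I_open (DeltaT O) alpha <-> continuous I_open O alpha.
Proof.
  split.
  - intros H V HV. apply H. intros beta Hb. exact (Hb V HV).
  - intros H V HV. exact (HV alpha H).
Qed.

Lemma DeltaT_Delta_generated {M : Type} (O : (M -> Prop) -> Prop) :
  Delta_generated (DeltaT O).
Proof.
  intros U; split; intros H alpha Ha; apply H; now apply path_continuous_DeltaT.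
Qed.

Lemma pre_Delta_monoid_DeltaT {M : Type} (O : (M -> Prop) -> Prop) (op : M -> M -> M) :
  pre_Delta_monoid (DeltaT O) op <-> pre_Delta_monoid O op.
Proof.
  split; intros H alpha beta Ha Hb; apply path_continuous_DeltaT;
    apply H; now apply path_continuous_DeltaT.
Qed.

Lemma proj_continuous {M : Type} (O : (M -> Prop) -> Prop) (k : nat) (i : fin k) :
  O (fun _ => True) -> continuous (prod_open O k) O (fun a => a i).
Proof.
  intros Hfull W HW a Wa.
  exists (fun j => if Nat.eq_dec (proj1_sig j) (proj1_sig i) then W else fun _ => True).
  split; [|split].
  - intros j; destruct (Nat.eq_dec (proj1_sig j) (proj1_sig i)); auto.
  - intros j; destruct (Nat.eq_dec (proj1_sig j) (proj1_sig i)) as [E|]; auto.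
    destruct i as [i hi]. now rewrite (fin_eq k i hi j E).
  - intros b Hb. specialize (Hb i).
    destruct (Nat.eq_dec (proj1_sig i) (proj1_sig i)); [exact Hb | congruence].
Qed.

Lemma prod_path_continuous {M : Type} (O : (M -> Prop) -> Prop) (k : nat)
  (gamma : I -> fin k -> M) :
  (forall i, continuous I_open O (fun t => gamma t i)) ->
  continuous I_open (prod_open O k) gamma.
Proof.
  intros Hg U HU t Ht. destruct (HU (gamma t) Ht) as [W [HWo [HWin HWsub]]].
  assert (Hbox : I_open (fun s => forall i, W i (gamma s i))).
  { apply I_open_fin_Inter. intros i. exact (Hg i _ (HWo i)). }
  destruct (Hbox t HWin) as [eps [He Hs]].
  exists eps; split; [exact He|]. intros s Hst. apply HWsub, Hs, Hst.
Qed.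

Lemma coord_path_continuous {M : Type} (O : (M -> Prop) -> Prop) (e : M) (k : nat)
  (alpha : I -> fin k -> M) (i : nat) :
  O (fun _ => True) -> continuous I_open (prod_open O k) alpha ->
  continuous I_open O (fun t => coord e k (alpha t) i).
Proof.
  intros Hfull Ha. unfold coord. destruct (lt_dec i k) as [h|h].
  - exact (continuous_comp _ _ _ _ _ Ha (proj_continuous O k _ Hfull)).
  - apply const_path_continuous.
Qed.

Lemma fold_right_op_path_continuous {M : Type} (O : (M -> Prop) -> Prop)
  (op : M -> M -> M) (e : M) (p : nat -> I -> M) (l : list nat) :
  pre_Delta_monoid O op -> (forall i, continuous I_open O (p i)) ->
  continuous I_open O (fun t => fold_right (fun i acc => op (p i t) acc) e l).
Proof.
  intros Hop Hp. induction l as [|i l IH]; simpl.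
  - apply const_path_continuous.
  - exact (Hop _ _ (Hp i) IH).
Qed.

Definition fin2_pair {M : Type} (a b : M) (i : fin 2) : M :=
  if Nat.eq_dec (proj1_sig i) 0 then a else b.

Lemma mu_2_pair {M : Type} (op : M -> M -> M) (e : M) (a b : M) :
  (forall x, op x e = x) -> mu_k op e 2 (fin2_pair a b) = op a b.
Proof.
  intros Hre. unfold mu_k. cbn [seq fold_right]. unfold coord.
  destruct (lt_dec 0 2); [|lia]. destruct (lt_dec 1 2); [|lia].
  simpl. now rewrite Hre.
Qed.

Lemma pair_path_continuous {M : Type} (O : (M -> Prop) -> Prop) (alpha beta : I -> M) :
  continuous I_open O alpha -> continuous I_open O beta ->
  continuous I_open (prod_open O 2) (fun t => fin2_pair (alpha t) (beta t)).
Proof.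
  intros Ha Hb. apply prod_path_continuous. intros i. unfold fin2_pair.
  destruct (Nat.eq_dec (proj1_sig i) 0); assumption.
Qed.

Lemma pre_Delta_monoid_mu_k_continuous {M : Type} (O : (M -> Prop) -> Prop)
  (op : M -> M -> M) (e : M) (k : nat) :
  O (fun _ => True) -> pre_Delta_monoid O op ->
  continuous (DeltaT (prod_open O k)) O (mu_k op e k).
Proof.
  intros Hfull Hop. apply continuous_DeltaT_iff. intros alpha Ha.
  apply fold_right_op_path_continuous; [exact Hop|].
  intros i. exact (coord_path_continuous O e k alpha i Hfull Ha).
Qed.

Lemma mu_2_continuous_pre_Delta_monoid {M : Type} (O : (M -> Prop) -> Prop)
  (op : M -> M -> M) (e : M) :
  (forall x, op x e = x) ->
  continuous (DeltaT (prod_open O 2)) O (mu_k op e 2) -> pre_Delta_monoid O op.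
Proof.
  intros Hre Hmu alpha beta Ha Hb.
  apply (path_continuous_ext _ (fun t => mu_k op e 2 (fin2_pair (alpha t) (beta t)))).
  { intros t. now apply mu_2_pair. }
  exact (proj1 (continuous_DeltaT_iff _ _ _) Hmu _ (pair_path_continuous O _ _ Ha Hb)).
Qed.

Lemma pre_Delta_monoid_pointwise_continuous {M D : Type} (O : (M -> Prop) -> Prop)
  (op : M -> M -> M) (TD : (D -> Prop) -> Prop) (f g : D -> M) :
  pre_Delta_monoid O op -> Delta_generated TD ->
  continuous TD O f -> continuous TD O g ->
  continuous TD O (fun x => op (f x) (g x)).
Proof.
  intros Hop HD Hf Hg. apply Delta_generated_continuous; [exact HD|].
  intros gamma Hgam.
  exact (Hop _ _ (continuous_comp _ _ _ _ _ Hgam Hf) (continuous_comp _ _ _ _ _ Hgam Hg)).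
Qed.

Theorem mainTheorem1 (M : Type) (op : M -> M -> M) (e : M) (T : (M -> Prop) -> Prop)
  (HT : is_topology T) (Hmon : is_monoid op e) :
  let P1 := pre_Delta_monoid T op in
  let P2 := Delta_monoid (DeltaT T) op in
  let P3 := forall k : nat, (2 <= k)%nat ->
              continuous (DeltaT (prod_open T k)) T (mu_k op e k) in
  let P4 := forall (D : Type) (TD : (D -> Prop) -> Prop),
              is_topology TD -> Delta_generated TD ->
              forall f g : D -> M, continuous TD T f -> continuous TD T g ->
              continuous TD T (fun x => op (f x) (g x)) in
  (P1 <-> P2) /\ (P1 <-> P3) /\ (P1 <-> P4).
Proof.
  intros P1 P2 P3 P4; subst P1 P2 P3 P4.
  destruct HT as [Hfull _]. destruct Hmon as [_ [_ Hre]].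
  split; [|split]; split.
  - intros H1. split; [apply DeltaT_Delta_generated | now apply pre_Delta_monoid_DeltaT].
  - intros [_ H2]. now apply pre_Delta_monoid_DeltaT.
  - intros H1 k _. now apply pre_Delta_monoid_mu_k_continuous.
  - intros H3. apply (mu_2_continuous_pre_Delta_monoid T op e Hre), H3; lia.
  - intros H1 D TD _ HD f g. now apply pre_Delta_monoid_pointwise_continuous.
  - intros H4 alpha beta. exact (H4 I I_open I_topology I_Delta_generated alpha beta).
Qed.
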